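(* Let $S$ be a training set of examples $(\mathbf{x},y)$ with $\mathbf{x}\in[-1,1]^d$, $y\in\{1,\dots,k\}$, let $\epsilon>0$, and let $W^\star\in\mathbb{R}^{k\times d}$ be an arbitrary matrix. Run ShareBoost on $S$ for $T=\left\lceil \frac{4}{\epsilon}\|W^\star\|_{\infty,1}^2\right\rceil$ iterations and let $W$ be the output matrix. Then $\|W\|_{\infty,0}\le T$ and $L(W)\le L(W^\star)+\epsilon$.
   Context: For $W\in\mathbb{R}^{k\times d}$, $W_{\cdot,i}$ denotes its $i$-th column; $\|W\|_{\infty,0}=|\{i:\|W_{\cdot,i}\|_\infty>0\}|$ is the number of nonzero columns and $\|W\|_{\infty,1}=\sum_{i=1}^d\|W_{\cdot,i}\|_\infty$. The loss of $W$ on $(\mathbf{x},y)$ is $\ell(W,(\mathbf{x},y))=\ln\sum_{y'\in\{1,\dots,k\}}\exp\big(\mathbf{1}[y'\neq y]-(W\mathbf{x})_y+(W\mathbf{x})_{y'}\big)$, and $L(W)=\frac1{|S|}\sum_{(\mathbf{x},y)\in S}\ell(W,(\mathbf{x},y))$. Write $\nabla_r L(W)\in\mathbb{R}^k$ for the $r$-th column of the gradient matrix $\nabla L(W)$. The ShareBoost algorithm: initialize $W=0$, $I=\emptyset$; for $t=1,\dots,T$: choose $r\in\{1,\dots,d\}$ maximizing $\|\nabla_r L(W)\|_1$ (ties broken arbitrarily), set $I\leftarrow I\cup\{r\}$, and set $W\leftarrow\arg\min\{L(V): V\in\mathbb{R}^{k\times d},\ V_{\cdot,i}=0\text{ for all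 }i\notin I\}$ (a minimizer is assumed to be attained at every iteration). *)

From Stdlib Require Import Reals Lra Lia List.
Import ListNotations.
Open Scope R_scope.

(* Matrices in R^{k x d}: functions row -> column -> R; only entries
   with row < k and column < d are ever used. Rows/labels are 0-based
   (label y in {1..k} of the paper is y-1 here), columns 0-based. *)
Definition mat := nat -> nat -> R.
Definition vec := nat -> R.

Fixpoint rsum (n : nat) (f : nat -> R) : R :=
  match n with O => 0 | S m => rsum m f + f m end.

(* max_{i < n} f i  (0 if n = 0; used on nonnegative quantities) *)
Fixpoint rmaxn (n : nat) (f : nat -> R) : R :=
  match n with O => 0 | S m => Rmax (rmaxn m f) (f m) end.

Fixpoint ncount (n : nat) (P : nat -> Prop) (dec : forall i, {P i} + {~ P i}) : nat :=
  match n with O => O | S m => (ncount m P dec + if dec m then 1 else 0)%nat end.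

Definition col_inf (k : nat) (W : mat) (i : nat) : R := rmaxn k (fun j => Rabs (W j i)).
Definition col_l1 (k : nat) (W : mat) (i : nat) : R := rsum k (fun j => Rabs (W j i)).

Definition norm_inf0 (k d : nat) (W : mat) : nat :=
  ncount d (fun i => 0 < col_inf k W i) (fun i => Rlt_dec 0 (col_inf k W i)).
Definition norm_inf1 (k d : nat) (W : mat) : R := rsum d (col_inf k W).

Definition matvec (d : nat) (W : mat) (x : vec) (j : nat) : R :=
  rsum d (fun i => W j i * x i).

Definition ind_neq (a b : nat) : R := if Nat.eqb a b then 0 else 1.

Definition loss (k d : nat) (W : mat) (ex : vec * nat) : R :=
  let (x, y) := ex in
  ln (rsum k (fun y' => exp (ind_neq y' y - matvec d W x y + matvec d W x y'))).

Definition Lrisk (k d : nat) (S : list (vec * nat)) (W : mat) : R :=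
  / INR (length S) * fold_right (fun ex acc => loss k d W ex + acc) 0 S.

Definition is_gradient (k d : nat) (F : mat -> R) (W : mat) (G : mat) : Prop :=
  forall j r, (j < k)%nat -> (r < d)%nat ->
    derivable_pt_lim
      (fun h => F (fun a b => W a b + (if andb (Nat.eqb a j) (Nat.eqb b r) then h else 0)))
      0 (G j r).

Definition supported_on (k d : nat) (I : nat -> Prop) (V : mat) : Prop :=
  forall j i, (j < k)%nat -> (i < d)%nat -> ~ I i -> V j i = 0.

(* W is a possible output of ShareBoost run for T iterations on S
   (ties broken arbitrarily, any minimizer allowed). *)
Definition shareboost_output (k d : nat) (S : list (vec * nat)) (T : nat) (W : mat) : Prop :=
  exists (Ws : nat -> mat) (Is : nat -> nat -> Prop) (rs : nat -> nat),
    Ws O = (fun _ _ => 0) /\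
    (forall i, ~ Is O i) /\
    (forall t, (t < T)%nat ->
       exists G, is_gradient k d (Lrisk k d S) (Ws t) G /\
         (rs t < d)%nat /\
         (forall r', (r' < d)%nat -> col_l1 k G r' <= col_l1 k G (rs t)) /\
         (forall i, Is (Datatypes.S t) i <-> (Is t i \/ i = rs t)) /\
         supported_on k d (Is (Datatypes.S t)) (Ws (Datatypes.S t)) /\
         (forall V, supported_on k d (Is (Datatypes.S t)) V ->
             Lrisk k d S (Ws (Datatypes.S t)) <= Lrisk k d S V)) /\
    W = Ws T.

(* ceiling of a real, as a natural number (0 for negative inputs) *)
Definition ceil_nat (x : R) : nat := Z.to_nat (1 - up (- x)).

From Stdlib Require Import Reals List Lra Lia ZArith Classical FunctionalExtensionality.
From Coquelicot Require Import Coquelicot.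
Open Scope R_scope.

(* The per-example loss is a log-sum-exp of scores that are linear in W.  Two
   inequalities for log-sum-exp (softmax weights p = e^a / sum e^a) drive the
   proof: LSE(a) + <p, b> <= LSE(a + b) (convexity) and, since
   e^z <= 1 + z + z^2 for z <= 1, LSE(a + w - w0) <= LSE(a) + <p, w - w0> + c^2
   when |w_j| <= c <= 1 (smoothness).  Averaged over the training set they give
   first- and second-order bounds for the risk L around any W, with gradient
   risk_grad W whose columns have l1 norm at most 2.  Consequences: the gradient
   of the ShareBoost specification is risk_grad; a minimizer on a support has
   zero gradient there, hence <grad L(W), W> = 0 and, by convexity and Hoelder,
   L(W) - L(Wstar) <= M ||Wstar||_{inf,1} for M the largest gradient column norm; and
   moving the greedily chosen column decreases L by at least M^2/4.  The scalar
   recursion a_{t+1} <= a_t - a_t^2 / (4 B^2) then yields T (L(W_T) - L(Wstar)) <= 4 B^2,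
   while the support of W_T consists of the T chosen columns. *)

Lemma rsum_ext n f g : (forall i, (i < n)%nat -> f i = g i) -> rsum n f = rsum n g.
Proof.
  induction n as [|n IH]; intro H; simpl; auto.
  rewrite IH by (intros; apply H; lia). rewrite H by lia. auto.
Qed.

Lemma rsum_le n f g : (forall i, (i < n)%nat -> f i <= g i) -> rsum n f <= rsum n g.
Proof.
  induction n as [|n IH]; intro H; simpl; [lra|].
  assert (rsum n f <= rsum n g) by (apply IH; intros; apply H; lia).
  assert (f n <= g n) by (apply H; lia). lra.
Qed.

Lemma rsum_plus n f g : rsum n (fun i => f i + g i) = rsum n f + rsum n g.
Proof. induction n as [|n IH]; simpl; [ring|]. rewrite IH. ring. Qed.

Lemma rsum_minus n f g : rsum n (fun i => f i - g i) = rsum n f - rsum n g.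
Proof. induction n as [|n IH]; simpl; [ring|]. rewrite IH. ring. Qed.

Lemma rsum_scal n c f : rsum n (fun i => c * f i) = c * rsum n f.
Proof. induction n as [|n IH]; simpl; [ring|]. rewrite IH. ring. Qed.

Lemma rsum_zero n f : (forall i, (i < n)%nat -> f i = 0) -> rsum n f = 0.
Proof.
  induction n as [|n IH]; intro H; simpl; auto.
  rewrite IH by (intros; apply H; lia). rewrite H by lia. ring.
Qed.

Lemma rsum_swap n m (f : nat -> nat -> R) :
  rsum n (fun i => rsum m (fun j => f i j)) = rsum m (fun j => rsum n (fun i => f i j)).
Proof.
  induction n as [|n IH]; simpl.
  - symmetry; apply rsum_zero; auto.
  - rewrite IH, <- rsum_plus. auto.
Qed.

Lemma rsum_delta n r f : (r < n)%nat -> rsum n (fun i => if Nat.eqb i r then f i else 0) = f r.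
Proof.
  induction n as [|n IH]; intro H; [lia|]. simpl.
  destruct (Nat.eq_dec r n) as [->|Hne].
  - rewrite Nat.eqb_refl, rsum_zero; [ring|].
    intros i Hi. destruct (Nat.eqb_spec i n); [lia|auto].
  - rewrite IH by lia. destruct (Nat.eqb_spec n r); [lia|ring].
Qed.

Lemma rsum_label k y f : (y < k)%nat -> rsum k (fun j => (1 - ind_neq j y) * f j) = f y.
Proof.
  intro H. rewrite <- (rsum_delta k y f H). apply rsum_ext. intros i _.
  unfold ind_neq. destruct (Nat.eqb i y); ring.
Qed.

Lemma rsum_nonneg n f : (forall i, (i < n)%nat -> 0 <= f i) -> 0 <= rsum n f.
Proof. intro H. rewrite <- (rsum_zero n (fun _ => 0)) by auto. apply rsum_le. auto. Qed.

Lemma rsum_pos n f : (0 < n)%nat -> (forall i, (i < n)%nat -> 0 < f i) -> 0 < rsum n f.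
Proof.
  intros Hn H. destruct n as [|n]; [lia|]. simpl.
  assert (0 <= rsum n f) by (apply rsum_nonneg; intros; left; apply H; lia).
  assert (0 < f n) by (apply H; lia). lra.
Qed.

Lemma rsum_abs n f : Rabs (rsum n f) <= rsum n (fun i => Rabs (f i)).
Proof.
  induction n as [|n IH]; simpl; [rewrite Rabs_R0; lra|].
  eapply Rle_trans; [apply Rabs_triang|]. lra.
Qed.

Lemma rmaxn_ge n f j : (j < n)%nat -> f j <= rmaxn n f.
Proof.
  induction n as [|n IH]; intro H; [lia|]. simpl.
  destruct (Nat.eq_dec j n) as [->|]; [apply Rmax_r|].
  eapply Rle_trans; [apply IH; lia|apply Rmax_l].
Qed.

Lemma rmaxn_nonneg n f : 0 <= rmaxn n f.
Proof. induction n; simpl; [lra|]. eapply Rle_trans; [eassumption|apply Rmax_l]. Qed.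

Lemma rmaxn_zero n f : (forall i, (i < n)%nat -> f i = 0) -> rmaxn n f = 0.
Proof.
  induction n as [|n IH]; intro H; simpl; auto.
  rewrite IH by (intros; apply H; lia). rewrite H by lia. apply Rmax_left. lra.
Qed.

Definition lsum {A} (l : list A) (f : A -> R) : R := fold_right (fun e acc => f e + acc) 0 l.

Lemma lsum_plus {A} (l : list A) f g : lsum l (fun e => f e + g e) = lsum l f + lsum l g.
Proof. induction l as [|a l IH]; simpl; [ring|]. rewrite IH. ring. Qed.

Lemma lsum_le {A} (l : list A) f g : (forall e, In e l -> f e <= g e) -> lsum l f <= lsum l g.
Proof.
  induction l as [|a l IH]; simpl; intro H; [lra|].
  assert (f a <= g a) by auto. assert (lsum l f <= lsum l g) by auto. lra.
Qed.

Lemma lsum_const {A} (l : list A) c : lsum l (fun _ => c) = INR (length l) * c.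
Proof. induction l as [|a l IH]; simpl lsum; simpl length; [simpl; ring|]. rewrite IH, S_INR. ring. Qed.

Lemma lsum_abs {A} (l : list A) f : Rabs (lsum l f) <= lsum l (fun e => Rabs (f e)).
Proof.
  induction l as [|a l IH]; simpl; [rewrite Rabs_R0; lra|].
  eapply Rle_trans; [apply Rabs_triang|]. lra.
Qed.

Lemma lsum_scal_r {A} (l : list A) c f : lsum l (fun e => f e * c) = lsum l f * c.
Proof. induction l as [|a l IH]; simpl; [ring|]. rewrite IH. ring. Qed.

Lemma rsum_lsum {A} (l : list A) n (f : A -> nat -> R) :
  rsum n (fun j => lsum l (fun e => f e j)) = lsum l (fun e => rsum n (f e)).
Proof. induction l as [|a l IH]; simpl; [apply rsum_zero; auto|]. rewrite rsum_plus, IH. auto. Qed.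

Lemma inv_INR_nonneg n : 0 <= / INR n.
Proof.
  destruct n; [simpl; rewrite Rinv_0; lra|].
  left; apply Rinv_0_lt_compat, lt_0_INR; lia.
Qed.

Lemma average_const_le n c : 0 <= c -> / INR n * (INR n * c) <= c.
Proof.
  intro. destruct n; [simpl; rewrite Rinv_0; lra|].
  assert (0 < INR (S n)) by (apply lt_0_INR; lia).
  rewrite <- Rmult_assoc, Rinv_l by lra. lra.
Qed.

(* Quadratic upper bound for exp on (-oo, 1]: the smoothness of the softmax loss
   rests on it. Proof: f z = (1 + z + z^2) e^{-z} has f' z = z (1 - z) e^{-z},
   so f attains its minimum 1 on (-oo, 1] at z = 0. *)
Lemma exp_le_quadratic (z : R) : z <= 1 -> exp z <= 1 + z + z * z.
Proof.
  intro Hz.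
  set (f := fun z => (1 + z + z * z) * exp (- z)).
  set (f' := fun c => c * (1 - c) * exp (- c)).
  assert (Hd : forall c, derivable_pt_lim f c (f' c)).
  { intro c. apply is_derive_Reals. unfold f, f'. auto_derive; auto. ring. }
  assert (Hf : 1 <= f z).
  { assert (f0 : f 0 = 1) by (unfold f; rewrite Ropp_0, exp_0; ring).
    destruct (Rtotal_order z 0) as [Hlt|[->|Hgt]]; [| lra |].
    - destruct (MVT_cor2 f f' z 0 Hlt (fun c _ => Hd c)) as [c [Hc Hcz]].
      assert (0 < exp (- c)) by apply exp_pos.
      assert (f' c <= 0) by (unfold f'; assert (c * (1 - c) <= 0) by nra; nra).
      nra.
    - destruct (MVT_cor2 f f' 0 z Hgt (fun c _ => Hd c)) as [c [Hc Hcz]].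
      assert (0 < exp (- c)) by apply exp_pos.
      assert (0 <= f' c) by (unfold f'; assert (0 <= c * (1 - c)) by nra; nra).
      nra. }
  unfold f in Hf.
  assert (exp z * exp (- z) = 1) by (rewrite <- exp_plus, Rplus_opp_r; apply exp_0).
  assert (0 < exp z) by apply exp_pos.
  nra.
Qed.

Lemma ln_1plus_le u : 0 < 1 + u -> ln (1 + u) <= u.
Proof. intro H. rewrite <- (ln_exp u) at 2. apply ln_le; auto. apply exp_ineq1_le. Qed.

Definition softmax (n : nat) (a : nat -> R) (j : nat) : R :=
  exp (a j) / rsum n (fun i => exp (a i)).

Lemma softmax_nonneg n a j : 0 < rsum n (fun i => exp (a i)) -> 0 <= softmax n a j.
Proof.
  intro HZ. unfold softmax, Rdiv.
  apply Rmult_le_pos; [left; apply exp_pos|left; apply Rinv_0_lt_compat; auto].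
Qed.

Lemma softmax_sum n a : 0 < rsum n (fun i => exp (a i)) -> rsum n (softmax n a) = 1.
Proof.
  intro HZ. unfold softmax. set (Z := rsum n (fun i => exp (a i))) in *.
  rewrite (rsum_ext _ _ (fun j => / Z * exp (a j))) by (intros; unfold Rdiv; ring).
  rewrite rsum_scal. fold Z. field. lra.
Qed.

Lemma softmax_mean n a b : 0 < rsum n (fun i => exp (a i)) ->
  rsum n (fun j => exp (a j) * b j) =
  rsum n (fun i => exp (a i)) * rsum n (fun j => softmax n a j * b j).
Proof.
  intro HZ. unfold softmax. set (Z := rsum n (fun i => exp (a i))) in *.
  rewrite (rsum_ext _ (fun j => exp (a j) / Z * b j) (fun j => / Z * (exp (a j) * b j)))
    by (intros; unfold Rdiv; ring).
  rewrite rsum_scal. field. lra.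
Qed.

Lemma lse_lower n a b : 0 < rsum n (fun j => exp (a j)) ->
  ln (rsum n (fun j => exp (a j))) + rsum n (fun j => softmax n a j * b j)
  <= ln (rsum n (fun j => exp (a j + b j))).
Proof.
  intro HZ. set (Z := rsum n (fun j => exp (a j))) in *.
  set (m := rsum n (fun j => softmax n a j * b j)).
  assert (Hm := softmax_mean n a b HZ). fold Z m in Hm.
  (* e^{b_j} >= e^m (1 + b_j - m), summed against e^{a_j} *)
  assert (H : exp m * Z <= rsum n (fun j => exp (a j + b j))).
  { apply Rle_trans with (rsum n (fun j => exp (a j) * (exp m * (1 + (b j - m))))).
    - rewrite (rsum_ext _ _ (fun j => exp m * exp (a j)
                 + (exp m * (exp (a j) * b j) - (exp m * m) * exp (a j)))) by (intros; ring).
      rewrite rsum_plus, rsum_minus, !rsum_scal, Hm. fold Z. lra.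
    - apply rsum_le. intros i _. rewrite exp_plus.
      apply Rmult_le_compat_l; [left; apply exp_pos|].
      replace (exp (b i)) with (exp m * exp (b i - m)) by (rewrite <- exp_plus; f_equal; ring).
      apply Rmult_le_compat_l; [left; apply exp_pos|]. apply exp_ineq1_le. }
  assert (0 < exp m) by apply exp_pos.
  apply ln_le in H; [|nra]. rewrite ln_mult, ln_exp in H by lra. lra.
Qed.

Lemma lse_upper n a w w0 c : 0 < rsum n (fun j => exp (a j)) ->
  (forall j, (j < n)%nat -> Rabs (w j) <= c) -> c <= 1 ->
  ln (rsum n (fun j => exp (a j + (w j - w0))))
  <= ln (rsum n (fun j => exp (a j))) + rsum n (fun j => softmax n a j * (w j - w0)) + c * c.
Proof.
  intros HZ Hw Hc. set (Z := rsum n (fun j => exp (a j))) in *.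
  assert (Hsum := softmax_sum n a HZ).
  set (m := rsum n (fun j => softmax n a j * w j)).
  assert (Hm := softmax_mean n a w HZ). fold Z m in Hm.
  assert (Hm0 : rsum n (fun j => softmax n a j * (w j - w0)) = m - w0).
  { rewrite (rsum_ext _ _ (fun j => softmax n a j * w j - w0 * softmax n a j)) by (intros; ring).
    rewrite rsum_minus, rsum_scal, Hsum. fold m. ring. }
  rewrite Hm0.
  assert (Hn : (0 < n)%nat) by (destruct n; [unfold Z in HZ; simpl in HZ; lra | lia]).
  assert (c0 : 0 <= c) by (pose proof (Hw 0%nat Hn); pose proof (Rabs_pos (w 0%nat)); lra).
  assert (Hmlow : - c <= m).
  { replace (- c) with (rsum n (fun j => softmax n a j * (- c)))
      by (rewrite (rsum_ext _ _ (fun j => - c * softmax n a j)) by (intros; ring);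
          rewrite rsum_scal, Hsum; ring).
    apply rsum_le. intros i Hi. apply Rmult_le_compat_l.
    - apply softmax_nonneg; auto.
    - exact (proj1 (proj1 (Rabs_le_between _ _) (Hw i Hi))). }
  (* termwise e^{w_j} <= 1 + w_j + c^2 *)
  assert (H : rsum n (fun j => exp (a j + (w j - w0))) <= exp (- w0) * (Z * (1 + m + c * c))).
  { apply Rle_trans with (rsum n (fun j => exp (- w0) * (exp (a j) * (1 + w j + c * c)))).
    - apply rsum_le. intros i Hi.
      replace (a i + (w i - w0)) with (- w0 + (a i + w i)) by ring. rewrite !exp_plus.
      apply Rmult_le_compat_l; [left; apply exp_pos|].
      apply Rmult_le_compat_l; [left; apply exp_pos|].
      assert (H1 := proj1 (Rabs_le_between _ _) (Hw i Hi)).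
      eapply Rle_trans; [apply exp_le_quadratic; lra|]. nra.
    - rewrite rsum_scal. apply Rmult_le_compat_l; [left; apply exp_pos|].
      rewrite (rsum_ext _ _ (fun j => (1 + c * c) * exp (a j) + exp (a j) * w j)) by (intros; ring).
      rewrite rsum_plus, rsum_scal, Hm. fold Z. lra. }
  assert (0 < 1 + m + c * c) by nra.
  assert (0 < exp (- w0)) by apply exp_pos.
  assert (0 < rsum n (fun j => exp (a j + (w j - w0)))) by (apply rsum_pos; auto; intros; apply exp_pos).
  apply ln_le in H; auto.
  rewrite !ln_mult, ln_exp in H by nra.
  assert (ln (1 + m + c * c) <= m + c * c)
    by (replace (1 + m + c * c) with (1 + (m + c * c)) by ring; apply ln_1plus_le; lra).
  lra.
Qed.

Definition mat_add (W D : mat) : mat := fun a b => W a b + D a b.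

Definition frob (k d : nat) (G D : mat) : R := rsum k (fun j => rsum d (fun i => G j i * D j i)).

Lemma matvec_add d W D x j : matvec d (mat_add W D) x j = matvec d W x j + matvec d D x j.
Proof. unfold matvec, mat_add. rewrite <- rsum_plus. apply rsum_ext. intros; ring. Qed.

Lemma frob_minus k d G V W : frob k d G (fun a b => V a b - W a b) = frob k d G V - frob k d G W.
Proof.
  unfold frob. rewrite <- rsum_minus. apply rsum_ext. intros.
  rewrite <- rsum_minus. apply rsum_ext. intros. ring.
Qed.

Lemma col_inf_nonneg k W i : 0 <= col_inf k W i.
Proof. apply rmaxn_nonneg. Qed.

Lemma norm_inf1_nonneg k d W : 0 <= norm_inf1 k d W.
Proof. apply rsum_nonneg. intros. apply col_inf_nonneg. Qed.

Lemma frob_holder k d G D M : (forall r, (r < d)%nat -> col_l1 k G r <= M) ->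
  Rabs (frob k d G D) <= M * norm_inf1 k d D.
Proof.
  intro HM. unfold frob. rewrite rsum_swap.
  eapply Rle_trans; [apply rsum_abs|]. unfold norm_inf1. rewrite <- rsum_scal.
  apply rsum_le. intros i Hi. eapply Rle_trans; [apply rsum_abs|].
  apply Rle_trans with (col_l1 k G i * col_inf k D i).
  - unfold col_l1. rewrite Rmult_comm, <- rsum_scal. apply rsum_le. intros j Hj.
    rewrite Rabs_mult.
    assert (Rabs (D j i) <= col_inf k D i) by (apply (rmaxn_ge k (fun j => Rabs (D j i))); auto).
    pose proof (Rabs_pos (G j i)). nra.
  - apply Rmult_le_compat_r; [apply col_inf_nonneg|auto].
Qed.

Definition unit_mat (j r : nat) (h : R) : mat :=
  fun a b => if andb (Nat.eqb a j) (Nat.eqb b r) then h else 0.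

Lemma frob_unit_mat k d G j r h : (j < k)%nat -> (r < d)%nat -> frob k d G (unit_mat j r h) = G j r * h.
Proof.
  intros Hj Hr. unfold frob, unit_mat.
  rewrite (rsum_ext k _ (fun a => if Nat.eqb a j then G a r * h else 0)); [apply rsum_delta; auto|].
  intros a _. destruct (Nat.eqb a j); simpl.
  - rewrite <- (rsum_delta d r (fun b => G a b * h) Hr). apply rsum_ext. intros b _.
    destruct (Nat.eqb b r); ring.
  - apply rsum_zero. intros; ring.
Qed.

Lemma matvec_unit_mat d j r h x a : (r < d)%nat -> Rabs (x r) <= 1 ->
  Rabs (matvec d (unit_mat j r h) x a) <= Rabs h.
Proof.
  intros Hr Hx. unfold matvec, unit_mat. destruct (Nat.eqb a j); simpl.
  - rewrite (rsum_ext d _ (fun b => if Nat.eqb b r then h * x b else 0))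
      by (intros b _; destruct (Nat.eqb b r); ring).
    rewrite rsum_delta, Rabs_mult by auto. pose proof (Rabs_pos h). nra.
  - rewrite rsum_zero, Rabs_R0 by (intros; ring). apply Rabs_pos.
Qed.

Lemma mat_add_unit_mat_0 W j r : mat_add W (unit_mat j r 0) = W.
Proof.
  apply functional_extensionality; intro a; apply functional_extensionality; intro b.
  unfold mat_add, unit_mat. destruct andb; ring.
Qed.

Definition col_mat (r : nat) (v : nat -> R) : mat := fun a b => if Nat.eqb b r then v a else 0.

Lemma frob_col_mat k d G r v : (r < d)%nat -> frob k d G (col_mat r v) = rsum k (fun a => G a r * v a).
Proof.
  intro Hr. unfold frob, col_mat. apply rsum_ext. intros a _.
  rewrite <- (rsum_delta d r (fun b => G a b * v a) Hr). apply rsum_ext. intros b _.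
  destruct (Nat.eqb b r); ring.
Qed.

Lemma matvec_col_mat d r v x a : (r < d)%nat -> matvec d (col_mat r v) x a = v a * x r.
Proof.
  intro Hr. unfold matvec, col_mat.
  rewrite <- (rsum_delta d r (fun b => v a * x b) Hr). apply rsum_ext. intros b _.
  destruct (Nat.eqb b r); ring.
Qed.

(* Perturbing W by D
   shifts score j by (D x)_j - (D x)_y, so the LSE bounds become
   first-order lower and second-order upper bounds for the loss. *)

Definition score (d : nat) (W : mat) (x : vec) (y j : nat) : R :=
  ind_neq j y - matvec d W x y + matvec d W x j.

Definition loss_grad (k d : nat) (W : mat) (x : vec) (y j i : nat) : R :=
  x i * (softmax k (score d W x y) j - (1 - ind_neq j y)).

Lemma partition_pos k d W x y : (y < k)%nat -> 0 < rsum k (fun j => exp (score d W x y j)).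
Proof. intro. apply rsum_pos; [lia|]. intros; apply exp_pos. Qed.

Lemma frob_loss_grad k d W x y D : (y < k)%nat ->
  rsum k (fun j => softmax k (score d W x y) j * (matvec d D x j - matvec d D x y))
  = frob k d (loss_grad k d W x y) D.
Proof.
  intro Hy. unfold frob, loss_grad. set (p := softmax k (score d W x y)).
  rewrite (rsum_ext k (fun j => rsum d _)
             (fun j => p j * matvec d D x j - (1 - ind_neq j y) * matvec d D x j)).
  2:{ intros j _. unfold matvec. rewrite <- rsum_scal, <- rsum_scal, <- rsum_minus.
      apply rsum_ext. intros; ring. }
  rewrite rsum_minus, rsum_label by auto.
  rewrite (rsum_ext k _ (fun j => p j * matvec d D x j - matvec d D x y * p j)) by (intros; ring).
  rewrite rsum_minus, rsum_scal. unfold p. rewrite softmax_sum by (apply partition_pos; auto). ring.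
Qed.

Lemma loss_mat_add k d W D x y :
  loss k d (mat_add W D) (x, y) =
  ln (rsum k (fun j => exp (score d W x y j + (matvec d D x j - matvec d D x y)))).
Proof. simpl. f_equal. apply rsum_ext. intros. rewrite !matvec_add. unfold score. f_equal. ring. Qed.

Lemma loss_lower k d W D x y : (y < k)%nat ->
  loss k d W (x, y) + frob k d (loss_grad k d W x y) D <= loss k d (mat_add W D) (x, y).
Proof.
  intro Hy. rewrite loss_mat_add, <- frob_loss_grad by auto.
  apply (lse_lower k (score d W x y)). apply partition_pos; auto.
Qed.

Lemma loss_upper k d W D x y c : (y < k)%nat ->
  (forall j, (j < k)%nat -> Rabs (matvec d D x j) <= c) -> c <= 1 ->
  loss k d (mat_add W D) (x, y) <= loss k d W (x, y) + frob k d (loss_grad k d W x y) D + c * c.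
Proof.
  intros Hy Hw Hc. rewrite loss_mat_add, <- frob_loss_grad by auto.
  apply (lse_upper k (score d W x y) (fun j => matvec d D x j)); auto.
  apply partition_pos; auto.
Qed.

Lemma loss_grad_col_l1 k d W x y r : (y < k)%nat -> Rabs (x r) <= 1 ->
  rsum k (fun j => Rabs (loss_grad k d W x y j r)) <= 2.
Proof.
  intros Hy Hx. unfold loss_grad. set (p := softmax k (score d W x y)).
  assert (Hp : forall j, 0 <= p j) by (intro; apply softmax_nonneg, partition_pos; auto).
  apply Rle_trans with (rsum k (fun j => p j + (1 - ind_neq j y) * 1)).
  - apply rsum_le. intros j _. rewrite Rabs_mult.
    assert (0 <= 1 - ind_neq j y <= 1) by (unfold ind_neq; destruct Nat.eqb; lra).
    assert (Rabs (p j - (1 - ind_neq j y)) <= p j + (1 - ind_neq j y) * 1)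
      by (apply Rabs_le_between; specialize (Hp j); lra).
    pose proof (Rabs_pos (x r)). pose proof (Rabs_pos (p j - (1 - ind_neq j y))). nra.
  - rewrite rsum_plus, rsum_label by auto. unfold p.
    rewrite softmax_sum by (apply partition_pos; auto). lra.
Qed.

Lemma frob_vanishes k d (I : nat -> Prop) G W : supported_on k d I W ->
  (forall j i, (j < k)%nat -> (i < d)%nat -> I i -> G j i = 0) -> frob k d G W = 0.
Proof.
  intros HW HG. unfold frob. apply rsum_zero. intros j Hj. apply rsum_zero. intros i Hi.
  destruct (classic (I i)) as [HIi|HIi].
  - rewrite (HG j i Hj Hi HIi). ring.
  - rewrite (HW j i Hj Hi HIi). ring.
Qed.

Lemma derivative_of_squeeze (phi : R -> R) G g :
  derivable_pt_lim phi 0 G ->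
  (forall h, 0 < h <= 1 -> h * g <= phi h - phi 0 <= h * g + h * h) -> G = g.
Proof.
  intros HD Hs. destruct (Req_dec G g) as [|Hne]; auto. exfalso.
  set (e := Rabs (G - g) / 2).
  assert (He : 0 < e) by (unfold e; assert (0 < Rabs (G - g)) by (apply Rabs_pos_lt; lra); lra).
  destruct (HD e He) as [dl Hdl].
  assert (Hdp := cond_pos dl).
  set (h := Rmin (dl / 2) (Rmin (e / 2) 1)).
  assert (Hh0 : 0 < h) by (unfold h; repeat apply Rmin_pos; lra).
  assert (Hh1 : h <= dl / 2) by apply Rmin_l.
  assert (Hh2 : h <= e / 2) by (unfold h; eapply Rle_trans; [apply Rmin_r|apply Rmin_l]).
  assert (Hh3 : h <= 1) by (unfold h; eapply Rle_trans; [apply Rmin_r|apply Rmin_r]).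
  assert (Hq := Hdl h ltac:(lra) ltac:(rewrite Rabs_right; lra)).
  rewrite Rplus_0_l in Hq.
  destruct (Hs h ltac:(lra)) as [H1 H2].
  (* the difference quotient lies in [g, g + h], within e/2 of g *)
  set (q := (phi h - phi 0) / h) in *.
  assert (Hq1 : g <= q <= g + h).
  { unfold q, Rdiv. split; apply Rmult_le_reg_r with h; auto;
      rewrite Rmult_assoc, Rinv_l by lra; lra. }
  apply Rabs_def2 in Hq.
  assert (HE : Rabs (G - g) = 2 * e) by (unfold e; field).
  destruct (Rcase_abs (G - g));
    [rewrite Rabs_left in HE by auto|rewrite Rabs_right in HE by auto]; lra.
Qed.

Lemma zero_of_quadratic_growth g : (forall h, -1 <= h <= 1 -> 0 <= h * g + h * h) -> g = 0.
Proof.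
  intro H. destruct (Req_dec g 0) as [|Hne]; auto. exfalso.
  assert (Hg : 0 < Rabs g) by (apply Rabs_pos_lt; auto).
  set (s := Rmin 1 (Rabs g / 2)).
  assert (0 < s) by (unfold s; apply Rmin_pos; lra).
  assert (s <= 1) by apply Rmin_l.
  assert (s <= Rabs g / 2) by apply Rmin_r.
  assert (Hs1 := H s ltac:(lra)). assert (Hs2 := H (- s) ltac:(lra)).
  unfold Rabs in *. destruct Rcase_abs; nra.
Qed.

Definition sgn (x : R) : R := if Rle_dec 0 x then 1 else -1.

Lemma sgn_mul x : x * sgn x = Rabs x.
Proof. unfold sgn, Rabs. destruct Rle_dec; destruct Rcase_abs; lra. Qed.

Lemma sgn_abs x : Rabs (sgn x) = 1.
Proof. unfold sgn. destruct Rle_dec; [apply Rabs_R1|rewrite Rabs_left by lra; lra]. Qed.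

Section Risk.

Variables (k d : nat) (S : list (vec * nat)).
Hypothesis labels_ok : forall ex, In ex S -> (snd ex < k)%nat.
Hypothesis features_ok : forall ex i, In ex S -> (i < d)%nat -> Rabs (fst ex i) <= 1.

Notation L := (Lrisk k d S).

Definition risk_grad (W : mat) : mat :=
  fun j i => / INR (length S) * lsum S (fun ex => loss_grad k d W (fst ex) (snd ex) j i).

Lemma Lrisk_lsum W : L W = / INR (length S) * lsum S (loss k d W).
Proof. reflexivity. Qed.

Lemma frob_risk_grad W D : frob k d (risk_grad W) D =
  / INR (length S) * lsum S (fun ex => frob k d (loss_grad k d W (fst ex) (snd ex)) D).
Proof.
  unfold frob, risk_grad.
  rewrite (rsum_ext k _ (fun j => / INR (length S) *
     lsum S (fun ex => rsum d (fun i => loss_grad k d W (fst ex) (snd ex) j i * D j i)))).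
  - rewrite rsum_scal. f_equal. apply rsum_lsum.
  - intros j _. rewrite <- rsum_lsum, <- rsum_scal. apply rsum_ext. intros i _.
    rewrite Rmult_assoc, lsum_scal_r. auto.
Qed.

Lemma risk_lower W D : L W + frob k d (risk_grad W) D <= L (mat_add W D).
Proof.
  rewrite !Lrisk_lsum, frob_risk_grad, <- Rmult_plus_distr_l.
  apply Rmult_le_compat_l; [apply inv_INR_nonneg|].
  rewrite <- lsum_plus. apply lsum_le. intros [x y] Hin. apply loss_lower, (labels_ok _ Hin).
Qed.

Lemma risk_upper W D c :
  (forall ex, In ex S -> forall j, (j < k)%nat -> Rabs (matvec d D (fst ex) j) <= c) ->
  0 <= c -> c <= 1 ->
  L (mat_add W D) <= L W + frob k d (risk_grad W) D + c * c.
Proof.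
  intros HD Hc0 Hc1. rewrite !Lrisk_lsum, frob_risk_grad.
  assert (Havg := average_const_le (length S) (c * c) ltac:(nra)).
  apply Rle_trans with (/ INR (length S) *
    (lsum S (fun ex => loss k d W ex + frob k d (loss_grad k d W (fst ex) (snd ex)) D) +
     INR (length S) * (c * c))); [|rewrite lsum_plus; lra].
  apply Rmult_le_compat_l; [apply inv_INR_nonneg|].
  rewrite <- lsum_const, <- lsum_plus. apply lsum_le.
  intros [x y] Hin. apply loss_upper; auto.
Qed.

Lemma risk_grad_col_l1 W r : (r < d)%nat -> col_l1 k (risk_grad W) r <= 2.
Proof.
  intro Hr. unfold col_l1, risk_grad.
  apply Rle_trans with (rsum k (fun j => / INR (length S) *
      lsum S (fun ex => Rabs (loss_grad k d W (fst ex) (snd ex) j r)))).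
  - apply rsum_le. intros j _.
    rewrite Rabs_mult, (Rabs_right (/ _)) by (apply Rle_ge, inv_INR_nonneg).
    apply Rmult_le_compat_l; [apply inv_INR_nonneg|apply lsum_abs].
  - rewrite rsum_scal, rsum_lsum.
    apply Rle_trans with (/ INR (length S) * (INR (length S) * 2)); [|apply average_const_le; lra].
    apply Rmult_le_compat_l; [apply inv_INR_nonneg|]. rewrite <- lsum_const. apply lsum_le.
    intros ex Hin. apply loss_grad_col_l1; auto.
Qed.

Lemma risk_gradient_unique W G : is_gradient k d L W G ->
  forall j r, (j < k)%nat -> (r < d)%nat -> G j r = risk_grad W j r.
Proof.
  intros HG j r Hj Hr.
  apply (derivative_of_squeeze (fun h => L (mat_add W (unit_mat j r h)))); [exact (HG j r Hj Hr)|].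
  intros h Hh. rewrite mat_add_unit_mat_0.
  assert (Hl := risk_lower W (unit_mat j r h)).
  assert (Hu := risk_upper W (unit_mat j r h) h).
  rewrite frob_unit_mat in Hl, Hu by auto.
  enough (L (mat_add W (unit_mat j r h)) <= L W + risk_grad W j r * h + h * h) by lra.
  apply Hu; try lra. intros ex Hin a _.
  eapply Rle_trans; [apply matvec_unit_mat; auto|rewrite Rabs_right; lra].
Qed.

Lemma minimizer_stationary (I : nat -> Prop) W : supported_on k d I W ->
  (forall V, supported_on k d I V -> L W <= L V) ->
  forall j i, (j < k)%nat -> (i < d)%nat -> I i -> risk_grad W j i = 0.
Proof.
  intros HW Hmin j i Hj Hi HIi. apply zero_of_quadratic_growth. intros h Hh.
  assert (Hu := risk_upper W (unit_mat j i h) (Rabs h)).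
  rewrite frob_unit_mat in Hu by auto.
  assert (Habs : Rabs h * Rabs h = h * h) by (rewrite <- Rabs_mult; apply Rabs_right; nra).
  assert (Hle : L W <= L (mat_add W (unit_mat j i h))).
  { apply Hmin. intros j' i' Hj' Hi' Hn. unfold mat_add, unit_mat.
    rewrite (HW j' i' Hj' Hi' Hn). destruct (Nat.eqb_spec i' i); [subst; contradiction|].
    rewrite Bool.andb_false_r. ring. }
  enough (L (mat_add W (unit_mat j i h)) <= L W + risk_grad W j i * h + Rabs h * Rabs h) by nra.
  apply Hu; [|apply Rabs_pos|apply Rabs_le_between; lra].
  intros ex Hin a _. apply matvec_unit_mat; auto.
Qed.

(* Convexity plus Hoelder: if <grad L(W), W> = 0 and all gradient columns have
   l1 norm <= M, then L W <= L V + M ||V||_{inf,1} for every V. *)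
Lemma suboptimality_gap W V M : frob k d (risk_grad W) W = 0 ->
  (forall r, (r < d)%nat -> col_l1 k (risk_grad W) r <= M) ->
  L W - L V <= M * norm_inf1 k d V.
Proof.
  intros Horth HM.
  assert (Hl := risk_lower W (fun a b => V a b - W a b)).
  replace (mat_add W (fun a b => V a b - W a b)) with V in Hl
    by (apply functional_extensionality; intro a; apply functional_extensionality; intro b;
        unfold mat_add; ring).
  rewrite frob_minus, Horth in Hl.
  assert (Hb := proj1 (Rabs_le_between _ _) (frob_holder k d (risk_grad W) V M HM)).
  lra.
Qed.

(* One greedy step: if W is supported on I and W' minimizes L over a support
   containing I and the column r, then L decreases by ||grad_r L(W)||_1^2 / 4.
   Witness: move column r by -(M/2) sgn(grad), with M = ||grad_r L(W)||_1. *)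
Lemma greedy_step_progress (I I' : nat -> Prop) W W' r : (r < d)%nat ->
  supported_on k d I W -> (forall i, I i -> I' i) -> I' r ->
  (forall V, supported_on k d I' V -> L W' <= L V) ->
  L W' <= L W - col_l1 k (risk_grad W) r * col_l1 k (risk_grad W) r / 4.
Proof.
  intros Hr HW HII' HI'r Hmin.
  set (g := risk_grad W). set (M := col_l1 k g r).
  assert (HM0 : 0 <= M) by (apply rsum_nonneg; intros; apply Rabs_pos).
  assert (HM2 : M <= 2) by (apply risk_grad_col_l1; auto).
  set (eta := M / 2).
  set (v := fun a => - eta * sgn (g a r)).
  assert (Hu := risk_upper W (col_mat r v) eta).
  rewrite frob_col_mat in Hu by auto.
  rewrite (rsum_ext k _ (fun a => (- eta) * Rabs (g a r))) in Hu
    by (intros a _; unfold v; rewrite <- sgn_mul; fold g; ring).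
  rewrite rsum_scal in Hu. change (rsum k (fun a => Rabs (g a r))) with M in Hu.
  assert (Hle : L W' <= L (mat_add W (col_mat r v))).
  { apply Hmin. intros j' i' Hj' Hi' Hn. unfold mat_add, col_mat.
    rewrite (HW j' i' Hj' Hi') by auto.
    destruct (Nat.eqb_spec i' r); [subst; contradiction|ring]. }
  enough (L (mat_add W (col_mat r v)) <= L W + - eta * M + eta * eta) by (unfold eta in *; lra).
  apply Hu; try (unfold eta; lra).
  intros ex Hin a _. rewrite matvec_col_mat by auto. unfold v.
  rewrite !Rabs_mult, sgn_abs, Rabs_Ropp, Rabs_right by (unfold eta; lra).
  assert (Rabs (fst ex r) <= 1) by auto. pose proof (Rabs_pos (fst ex r)). unfold eta; nra.
Qed.

End Risk.

Lemma ncount_split n P Q R dP dQ dR : (forall i, (i < n)%nat -> P i -> Q i \/ R i) ->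
  (ncount n P dP <= ncount n Q dQ + ncount n R dR)%nat.
Proof.
  induction n as [|n IH]; intro H; simpl; [lia|].
  assert (IH' := IH ltac:(intros; apply H; auto; lia)).
  destruct (dP n) as [Hp|Hp]; destruct (dQ n); destruct (dR n); try lia.
  exfalso. destruct (H n ltac:(lia) Hp); auto.
Qed.

Lemma ncount_singleton n v :
  ncount n (fun i => i = v) (fun i => Nat.eq_dec i v) = (if Nat.ltb v n then 1 else 0)%nat.
Proof.
  induction n as [|n IH]; simpl; auto. rewrite IH.
  destruct (Nat.eq_dec n v); destruct (Nat.ltb_spec v n); destruct (Nat.ltb_spec v (S n)); lia.
Qed.

Lemma ncount_zero n P dP : (forall i, (i < n)%nat -> ~ P i) -> ncount n P dP = 0%nat.
Proof.
  induction n as [|n IH]; intro H; simpl; auto. rewrite IH by (intros; apply H; lia).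
  destruct (dP n) as [Hp|]; auto. exfalso; apply (H n); auto.
Qed.

Lemma ncount_image_bound T : forall n P dP (f : nat -> nat),
  (forall i, (i < n)%nat -> P i -> exists s, (s < T)%nat /\ f s = i) -> (ncount n P dP <= T)%nat.
Proof.
  induction T as [|T IH]; intros n P dP f H.
  - rewrite ncount_zero; auto. intros i Hi Hp. destruct (H i Hi Hp) as [s [Hs _]]. lia.
  - (* split off the value f T and apply induction to the rest *)
    set (P' := fun i => P i /\ i <> f T).
    assert (dP' : forall i, {P' i} + {~ P' i}).
    { intro i. unfold P'. destruct (dP i); destruct (Nat.eq_dec i (f T)); [right|left|right|right]; tauto. }
    assert (H1 := ncount_split n P P' (fun i => i = f T) dP dP' (fun i => Nat.eq_dec i (f T))
                 ltac:(intros i _ Hp; unfold P'; destruct (Nat.eq_dec i (f T)); tauto)).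
    assert (H2 := IH n P' dP' f ltac:(intros i Hi [Hp Hne]; destruct (H i Hi Hp) as [s [Hs Hf]];
                 exists s; split; auto; destruct (Nat.eq_dec s T); [subst; congruence|lia])).
    rewrite ncount_singleton in H1. destruct (Nat.ltb (f T) n); lia.
Qed.

Lemma ceil_nat_ge x : x <= INR (ceil_nat x).
Proof.
  unfold ceil_nat. destruct (archimed (- x)) as [H1 H2].
  destruct (Z_le_gt_dec 0 (1 - up (- x))) as [Hz|Hz].
  - rewrite INR_IZR_INZ, Z2Nat.id, minus_IZR by auto. simpl. lra.
  - apply Z.gt_lt, IZR_lt in Hz. rewrite minus_IZR in Hz. simpl in Hz.
    pose proof (pos_INR (Z.to_nat (1 - up (- x)))). lra.
Qed.

Lemma rate_of_descent (a : nat -> R) (B : R) (T : nat) : 0 <= B ->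
  (forall t, (t < T)%nat -> exists M, 0 <= M /\ a t <= M * B /\ a (S t) <= a t - M * M / 4) ->
  forall t, (t <= T)%nat -> INR t * a t <= 4 * (B * B).
Proof.
  intros HB H. induction t as [|t IH]; intro Ht; [simpl; nra|].
  assert (IHt := IH ltac:(lia)). destruct (H t ltac:(lia)) as [M [HM0 [HM1 HM2]]].
  rewrite S_INR. pose proof (pos_INR t).
  destruct (Rle_lt_dec (a (S t)) 0) as [Hn|Hp]; [nra|].
  set (K := 4 * (B * B)) in *. set (u := a t) in *. set (v := a (S t)) in *.
  assert (Hu : 0 < u) by nra.
  assert (HBp : 0 < B) by nra.
  (* from u <= M B:  v <= u - u^2 / K *)
  assert (Hsq : u * u <= M * B * (M * B)) by nra.
  assert (HvK : v * K <= u * K - u * u) by (unfold K; nra).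
  assert (HK : 0 < K) by (unfold K; nra).
  assert (Hu2 : u < K) by nra.
  (* and (t + 1)(u K - u^2) <= K^2 since t u <= K *)
  assert (Hmain : (INR t + 1) * (u * K - u * u) <= K * K).
  { assert (0 <= (K - INR t * u) * (K - u)) by (apply Rmult_le_pos; lra).
    replace ((INR t + 1) * (u * K - u * u)) with (K * K - u * u - (K - INR t * u) * (K - u)) by ring.
    nra. }
  assert ((INR t + 1) * v * K <= K * K) by nra.
  apply Rmult_le_reg_r with K; auto.
Qed.

Lemma gap_below_eps (gap B eps : R) (T : nat) : 0 < eps -> 0 <= B ->
  gap <= 2 * B -> INR T * gap <= 4 * (B * B) -> 4 / eps * B ^ 2 <= INR T -> gap <= eps.
Proof.
  intros Heps HB Hgap Hrate HT.
  assert (HTB : 4 * (B * B) <= eps * INR T).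
  { replace (4 * (B * B)) with (eps * (4 / eps * B ^ 2)) by (field; lra).
    apply Rmult_le_compat_l; lra. }
  destruct T as [|T].
  - simpl in HTB. assert (B = 0) by nra. lra.
  - assert (0 < INR (S T)) by (apply lt_0_INR; lia).
    apply Rmult_le_reg_l with (INR (S T)); nra.
Qed.

Section Trajectory.

Variables (k d : nat) (S : list (vec * nat)).
Hypothesis labels_ok : forall ex, In ex S -> (snd ex < k)%nat.
Hypothesis features_ok : forall ex i, In ex S -> (i < d)%nat -> Rabs (fst ex i) <= 1.

Variables (T : nat) (Ws : nat -> mat) (Is : nat -> nat -> Prop) (rs : nat -> nat).
Hypothesis start_zero : Ws O = (fun _ _ => 0).
Hypothesis start_empty : forall i, ~ Is O i.
Hypothesis greedy_steps : forall t, (t < T)%nat ->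
  exists G, is_gradient k d (Lrisk k d S) (Ws t) G /\
    (rs t < d)%nat /\
    (forall r', (r' < d)%nat -> col_l1 k G r' <= col_l1 k G (rs t)) /\
    (forall i, Is (Datatypes.S t) i <-> (Is t i \/ i = rs t)) /\
    supported_on k d (Is (Datatypes.S t)) (Ws (Datatypes.S t)) /\
    (forall V, supported_on k d (Is (Datatypes.S t)) V ->
        Lrisk k d S (Ws (Datatypes.S t)) <= Lrisk k d S V).

Notation L := (Lrisk k d S).

Lemma iterate_support t : (t <= T)%nat -> supported_on k d (Is t) (Ws t).
Proof.
  destruct t as [|t]; intro Ht.
  - rewrite start_zero. intros j i _ _ _. auto.
  - destruct (greedy_steps t ltac:(lia)) as [G [_ [_ [_ [_ [Hs _]]]]]]. auto.
Qed.

(* Every iterate is a minimizer on its support, hence orthogonal to its gradient. *)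
Lemma iterate_orthogonal t : (t <= T)%nat -> frob k d (risk_grad k d S (Ws t)) (Ws t) = 0.
Proof.
  intro Ht. apply (frob_vanishes k d (Is t)); [apply iterate_support; auto|].
  destruct t as [|t]; intros j i Hj Hi HIi; [exfalso; apply (start_empty i HIi)|].
  destruct (greedy_steps t ltac:(lia)) as [G [_ [_ [_ [_ [Hs Hmin]]]]]].
  apply (minimizer_stationary k d S labels_ok features_ok (Is (Datatypes.S t))); auto.
Qed.

(* The gap of any iterate is controlled by the crude column bound M = 2. *)
Lemma iterate_gap V t : (t <= T)%nat -> L (Ws t) - L V <= 2 * norm_inf1 k d V.
Proof.
  intro Ht. apply suboptimality_gap; auto; [apply iterate_orthogonal; auto|].
  intros. apply risk_grad_col_l1; auto.
Qed.

(* Each step: with M the l1 norm of the chosen gradient column, which is the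
   largest one, the gap is at most M ||V||_{inf,1} and drops by M^2/4. *)
Lemma iterate_descent V t : (t < T)%nat -> exists M, 0 <= M /\
  L (Ws t) - L V <= M * norm_inf1 k d V /\
  L (Ws (Datatypes.S t)) - L V <= L (Ws t) - L V - M * M / 4.
Proof.
  intro Ht.
  destruct (greedy_steps t Ht) as [G [HG [Hr [Hmax [HIs [_ Hmin]]]]]].
  assert (HGcol : forall r, (r < d)%nat -> col_l1 k G r = col_l1 k (risk_grad k d S (Ws t)) r).
  { intros r Hr'. apply rsum_ext. intros j Hj.
    rewrite (risk_gradient_unique k d S labels_ok features_ok (Ws t) G HG j r); auto. }
  exists (col_l1 k (risk_grad k d S (Ws t)) (rs t)). split; [|split].
  - apply rsum_nonneg. intros. apply Rabs_pos.
  - apply suboptimality_gap; auto; [apply iterate_orthogonal; lia|].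
    intros r Hr'. rewrite <- !HGcol by auto. apply Hmax; auto.
  - enough (L (Ws (Datatypes.S t)) <= L (Ws t) -
      col_l1 k (risk_grad k d S (Ws t)) (rs t) * col_l1 k (risk_grad k d S (Ws t)) (rs t) / 4) by lra.
    apply (greedy_step_progress k d S labels_ok features_ok (Is t) (Is (Datatypes.S t))); auto.
    + apply iterate_support; lia.
    + intros i HIi. apply HIs. auto.
    + apply HIs. auto.
Qed.

Lemma final_rate V : INR T * (L (Ws T) - L V) <= 4 * (norm_inf1 k d V * norm_inf1 k d V).
Proof.
  apply (rate_of_descent (fun t => L (Ws t) - L V) _ T); [apply norm_inf1_nonneg| |lia].
  intros. apply iterate_descent. auto.
Qed.

Lemma support_chosen t : (t <= T)%nat -> forall i, Is t i -> exists s, (s < t)%nat /\ rs s = i.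
Proof.
  induction t as [|t IH]; intros Ht i HIi; [exfalso; apply (start_empty i HIi)|].
  destruct (greedy_steps t ltac:(lia)) as [G [_ [_ [_ [HIs _]]]]].
  destruct (proj1 (HIs i) HIi) as [HIt | ->].
  - destruct (IH ltac:(lia) i HIt) as [s [Hs Hrs]]. exists s. split; auto.
  - exists t. split; auto.
Qed.

(* Only chosen columns of the output are nonzero, so at most T of them. *)
Lemma final_sparsity : (norm_inf0 k d (Ws T) <= T)%nat.
Proof.
  apply ncount_image_bound with (f := rs). intros i Hi Hpos.
  destruct (classic (Is T i)) as [HIi|HIi]; [apply (support_chosen T); auto|].
  exfalso. unfold col_inf in Hpos.
  rewrite (rmaxn_zero k (fun j => Rabs (Ws T j i))) in Hpos; [lra|].
  intros j Hj. rewrite (iterate_support T ltac:(lia) j i Hj Hi HIi). apply Rabs_R0.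
Qed.

End Trajectory.

Theorem theorem2 (k d : nat) (S : list (vec * nat)) (eps : R) (Wstar W : mat) :
  (forall ex, In ex S ->
     (snd ex < k)%nat /\ (forall i, (i < d)%nat -> -1 <= fst ex i <= 1)) ->
  0 < eps ->
  shareboost_output k d S (ceil_nat (4 / eps * (norm_inf1 k d Wstar) ^ 2)) W ->
  (norm_inf0 k d W <= ceil_nat (4 / eps * (norm_inf1 k d Wstar) ^ 2))%nat /\
  Lrisk k d S W <= Lrisk k d S Wstar + eps.
Proof.
  intros HS Heps [Ws [Is [rs [H0 [HI0 [Hsteps ->]]]]]].
  set (T := ceil_nat (4 / eps * (norm_inf1 k d Wstar) ^ 2)) in *.
  assert (Hlab : forall ex, In ex S -> (snd ex < k)%nat) by (intros; apply HS; auto).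
  assert (Hfeat : forall ex i, In ex S -> (i < d)%nat -> Rabs (fst ex i) <= 1)
    by (intros ex i Hin Hi; apply Rabs_le_between, (proj2 (HS ex Hin)); auto).
  split; [exact (final_sparsity k d S T Ws Is rs H0 HI0 Hsteps)|].
  enough (Lrisk k d S (Ws T) - Lrisk k d S Wstar <= eps) by lra.
  apply (gap_below_eps _ (norm_inf1 k d Wstar) eps T Heps (norm_inf1_nonneg k d Wstar)).
  - apply (iterate_gap k d S Hlab Hfeat T Ws Is rs H0 HI0 Hsteps); lia.
  - apply (final_rate k d S Hlab Hfeat T Ws Is rs H0 HI0 Hsteps).
  - apply ceil_nat_ge.
Qed.
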